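(* Let $\Gamma$ be a finite undirected simple graph with vertex set $\{x_1,\dots,x_n\}$ whose maximal vertex degree equals $n-2$ and such that exactly one vertex has degree $n-2$. Then the associated group $G_\Gamma$ has the $R_\infty$-property.
   Context: For a finite undirected simple graph $\Gamma$ with vertex set $\{x_1,\dots,x_n\}$ and edge set $E$, the group $G_\Gamma$ is defined by the presentation with generators $x_1,\dots,x_n$ and $y_{i,j}$ for each pair $i<j$ with $x_ix_j\notin E$, and relations $[x_j,x_i]=1$ if $x_ix_j\in E$; $[x_j,x_i]=y_{i,j}$ if $x_ix_j\notin E$ and $i<j$; and $[x_l,y_{i,j}]=1$ for all $l$ and all such $y_{i,j}$. For a group $G$ and $\varphi\in\mathrm{Aut}(G)$, elements $a,b$ are $\varphi$-conjugate if $a=cb\varphi(c)^{-1}$ for some $c\in G$; the number $R(\varphi)\in\mathbb{N}_0\cup\{\infty\}$ of equivalence classes is the Reidemeister number. The Reidemeister spectrum is $\mathrm{Spec}_R(G)=\{R(\varphi):\varphi\in\mathrm{Aut}(G)\}$, and $G$ has the $R_\infty$-property if $\mathrm{Spec}_R(G)=\{\infty\}$. Here $\mathbb{N}_0$ denotes the positive integers. *)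

From Stdlib Require Import List.
From mathcomp Require Import all_boot.
Set Implicit Arguments. Unset Strict Implicit. Unset Printing Implicit Defensive.

Record group := Group {
  gcar :> Type;
  gmul : gcar -> gcar -> gcar;
  gone : gcar;
  ginv : gcar -> gcar;
  gmulA : forall a b c, gmul a (gmul b c) = gmul (gmul a b) c;
  gmul1l : forall a, gmul gone a = a;
  gmulVl : forall a, gmul (ginv a) a = gone
}.

Definition is_hom (G H : group) (f : G -> H) : Prop :=
  forall a b : G, f (gmul a b) = gmul (f a) (f b).

Definition is_aut (G : group) (phi : G -> G) : Prop :=
  is_hom phi /\ bijective phi.

Definition comm (G : group) (a b : G) : G :=
  gmul (gmul (gmul (ginv a) (ginv b)) a) b.

Definition simple_graph (n : nat) (e : rel 'I_n) : Prop :=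
  (forall i j, e i j = e j i) /\ (forall i, ~~ e i i).

Definition deg (n : nat) (e : rel 'I_n) (i : 'I_n) : nat := #|[set j | e i j]|.

(* the defining relations of G_Gamma, for candidate images x_i, y_{i,j}
   (y i j is only relevant for i < j with x_i x_j not an edge) *)
Definition GammaRel (n : nat) (e : rel 'I_n) (H : group)
    (x : 'I_n -> H) (y : 'I_n -> 'I_n -> H) : Prop :=
  (forall i j : 'I_n, i < j -> e i j -> comm (x j) (x i) = gone H) /\
  (forall i j : 'I_n, i < j -> ~~ e i j -> comm (x j) (x i) = y i j) /\
  (forall l i j : 'I_n, i < j -> ~~ e i j -> comm (x l) (y i j) = gone H).

(* (G, x, y) is a presentation of G_Gamma: the relations hold and
   the universal property of the presented group holds *)
Definition presents_GGamma (n : nat) (e : rel 'I_n) (G : group)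
    (x : 'I_n -> G) (y : 'I_n -> 'I_n -> G) : Prop :=
  GammaRel e x y /\
  forall (H : group) (xh : 'I_n -> H) (yh : 'I_n -> 'I_n -> H),
    GammaRel e xh yh ->
    exists f : G -> H,
      [/\ is_hom f,
          (forall i, f (x i) = xh i),
          (forall i j : 'I_n, i < j -> ~~ e i j -> f (y i j) = yh i j) &
          (forall g : G -> H, is_hom g ->
             (forall i, g (x i) = xh i) ->
             (forall i j : 'I_n, i < j -> ~~ e i j -> g (y i j) = yh i j) ->
             forall a, g a = f a)].

Definition twisted_conj (G : group) (phi : G -> G) (a b : G) : Prop :=
  exists c : G, a = gmul (gmul c b) (ginv (phi c)).

Definition reidemeister_infinite (G : group) (phi : G -> G) : Prop :=
  forall s : seq G, exists a : G, forall b, List.In b s -> ~ twisted_conj phi a b.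

Definition R_infty_property (G : group) : Prop :=
  forall phi : G -> G, is_aut phi -> reidemeister_infinite phi.

(* Let v be the vertex of degree n-2 and w its only non-neighbour; every other vertex k
   has two distinct non-neighbours. Each non-edge (k, j) gives a Heisenberg quotient
   G -> H3(Z) sending x_k, x_j to the two standard generators, and in every Heisenberg
   quotient the commutator [x_v, g] only depends on the x_w-exponent of g. Comparing the
   two quotients of the non-edges at k shows that, for an automorphism phi, phi(x_v) has
   no x_k-component for k <> v; similarly phi(x_i) has no x_w-component for i <> w.
   Let M be the matrix of phi on the abelianisation. If det(1 - M) = 0, a phi-invariant
   character G -> Q separates the powers of a generator into distinct twisted classes.
   Otherwise M_vv = M_ww = -1, and a (-1)-eigenvector of M supported on the non-neighbours
   of w yields a Heisenberg quotient rho on whose abelian part phi acts with determinant 1.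
   Then phi fixes the centre coordinate of rho on the kernel of the abelianisation, so the
   powers of a commutator with central nonzero rho-image lie in distinct twisted classes. *)

From Pilot Require Import Defs.
From mathcomp Require Import all_boot all_algebra.
From mathcomp Require Import ring zify.
From Stdlib Require Import ClassicalEpsilon Classical.
Set Implicit Arguments. Unset Strict Implicit. Unset Printing Implicit Defensive.
Import GRing.Theory Num.Theory.

Section GroupTheory.
Variable G : group.
Implicit Types a b : G.
Local Notation "a * b" := (gmul a b).
Local Notation "1" := (gone G).

Lemma gmul_idem a : a * a = a -> a = 1.
Proof. by move=> aa; rewrite -(gmul1l a) -(gmulVl a) -gmulA aa. Qed.

Lemma gmulVr a : a * ginv a = 1.
Proof. by apply: gmul_idem; rewrite -gmulA (gmulA (ginv a) a) gmulVl gmul1l. Qed.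

Lemma gmul1r a : a * 1 = a.
Proof. by rewrite -(gmulVl a) gmulA gmulVr gmul1l. Qed.

Lemma gmulVK a b : a * ginv b * b = a.
Proof. by rewrite -gmulA gmulVl gmul1r. Qed.

Lemma ginv_unique a b : b * a = 1 -> b = ginv a.
Proof. by move=> ba; rewrite -(gmul1r b) -(gmulVr a) gmulA ba gmul1l. Qed.

Lemma ginvM a b : ginv (a * b) = ginv b * ginv a.
Proof.
by symmetry; apply: ginv_unique; rewrite -gmulA (gmulA (ginv a)) gmulVl gmul1l gmulVl.
Qed.

Lemma ginvK a : ginv (ginv a) = a.
Proof. by symmetry; apply: ginv_unique; rewrite gmulVr. Qed.

End GroupTheory.

Section Homomorphisms.
Variables (G H : group) (f : G -> H).
Hypothesis f_hom : is_hom f.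

Lemma hom1 : f (gone G) = gone H.
Proof. by apply: gmul_idem; rewrite -f_hom gmul1l. Qed.

Lemma homV a : f (ginv a) = ginv (f a).
Proof. by apply: ginv_unique; rewrite -f_hom gmulVl hom1. Qed.

Lemma hom_comm a b : f (comm a b) = comm (f a) (f b).
Proof. by rewrite /comm !f_hom !homV. Qed.

Lemma hom_can g : cancel f g -> cancel g f -> is_hom g.
Proof. by move=> fK gK a b; apply: (can_inj fK); rewrite f_hom !gK. Qed.

End Homomorphisms.

Lemma hom_comp (G H K : group) (f : G -> H) (g : H -> K) :
  is_hom f -> is_hom g -> is_hom (fun a => g (f a)).
Proof. by move=> f_hom g_hom a b; rewrite f_hom g_hom. Qed.

Definition gpow (G : group) (g : G) (k : nat) : G := iter k (gmul g) (gone G).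

Lemma hom_gpow (G H : group) (f : G -> H) g k :
  is_hom f -> f (gpow g k) = gpow (f g) k.
Proof. by move=> f_hom; elim: k => [|k IHk] /=; [exact: hom1 | rewrite f_hom IHk]. Qed.

Section Reidemeister.
Variables (G : group) (phi : G -> G).
Hypothesis phi_hom : is_hom phi.

Lemma twisted_conj_trans a a' b :
  twisted_conj phi a b -> twisted_conj phi a' b -> twisted_conj phi a a'.
Proof.
move=> [c ->] [c' ->]; exists (gmul c (ginv c')).
by rewrite phi_hom (homV phi_hom) ginvM ginvK !gmulA !gmulVK.
Qed.

Lemma reidemeister_infinite_of_family (z : nat -> G) :
  (forall k l c, z k = gmul (gmul c (z l)) (ginv (phi c)) -> k = l) ->
  reidemeister_infinite phi.
Proof.
move=> z_sep.
have meet_once b : exists N, forall k, N <= k -> ~ twisted_conj phi (z k) b.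
  have [[k0 zb]|] := classic (exists k0, twisted_conj phi (z k0) b); last first.
    by move=> nzb; exists 0 => k _ zb; apply: nzb; exists k.
  exists k0.+1 => k lt_k0k zb'.
  have [c /z_sep eq_kk0] := twisted_conj_trans zb' zb.
  by move: lt_k0k; rewrite eq_kk0 ltnn.
move=> s; suff [N zN] : exists N, forall k, N <= k ->
    forall b, List.In b s -> ~ twisted_conj phi (z k) b.
  by exists (z N); apply: zN.
elim: s => [|b s [N IH]]; first by exists 0.
have [Nb zNb] := meet_once b.
exists (maxn N Nb) => k; rewrite geq_max => /andP[kN kNb] b' [<-|]; [exact: zNb | exact: IH].
Qed.
End Reidemeister.

Definition nonnb (n : nat) (e : rel 'I_n) (k : 'I_n) : {set 'I_n} :=
  [set j | ~~ e k j & j != k].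

Lemma card_nonnb n (e : rel 'I_n) k : simple_graph e -> #|nonnb e k| + deg e k = n.-1.
Proof.
move=> [_ irr]; have := cardsC [set j | e k j].
rewrite card_ord (cardsD1 k (~: _)) !inE irr.
have -> : ~: [set j | e k j] :\ k = nonnb e k by apply/setP => j; rewrite !inE andbC.
by rewrite /deg => /(congr1 predn) <-; rewrite add1n addnS /= addnC.
Qed.

Local Open Scope ring_scope.

Definition addG (V : zmodType) : group :=
  @Defs.Group V +%R 0 -%R (@addrA V) (@add0r V) (@addNr V).

Lemma comm_addG (V : zmodType) (a b : addG V) : comm a b = 0.
Proof. by rewrite /comm /= addrAC subrK addNr. Qed.

Lemma gpow_addG (V : zmodType) (a : addG V) k : gpow a k = a *+ k.
Proof. exact: iter_addr_0. Qed.

Lemma reidemeister_infinite_of_fixed_character (R : numDomainType) (G : group)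
    (phi : G -> G) (h : G -> addG R) (g : G) :
  is_hom phi -> is_hom h -> (forall c, h (phi c) = h c) -> h g != 0 ->
  reidemeister_infinite phi.
Proof.
move=> phi_hom h_hom h_phi hg0; apply: (reidemeister_infinite_of_family phi_hom (z := gpow g)).
move=> k l c /(congr1 h); rewrite !h_hom (homV h_hom) h_phi !(hom_gpow _ _ h_hom) !gpow_addG /=.
by rewrite addrC addKr; apply: mulrIn.
Qed.

(* [Heis3 p q z] stands for the unitriangular matrix [[1, p, z], [0, 1, q], [0, 0, 1]]. *)
Record heis3 (R : Type) := Heis3 { hp : R; hq : R; hz : R }.

Section Heisenberg.
Variable R : comPzRingType.

Definition heis_mul (s t : heis3 R) :=
  Heis3 (hp s + hp t) (hq s + hq t) (hz s + hz t + hp s * hq t).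
Definition heis_inv (s : heis3 R) := Heis3 (- hp s) (- hq s) (- hz s + hp s * hq s).

Lemma heis_mulA : associative heis_mul.
Proof. by move=> [a1 a2 a3] [b1 b2 b3] [c1 c2 c3]; congr Heis3 => /=; ring. Qed.

Lemma heis_mul1 : left_id (Heis3 0 0 0) heis_mul.
Proof. by move=> [a1 a2 a3]; congr Heis3 => /=; ring. Qed.

Lemma heis_mulV : left_inverse (Heis3 0 0 0) heis_inv heis_mul.
Proof. by move=> [a1 a2 a3]; congr Heis3 => /=; ring. Qed.

Definition Heis : group :=
  @Defs.Group (heis3 R) heis_mul (Heis3 0 0 0) heis_inv heis_mulA heis_mul1 heis_mulV.

Lemma comm_Heis (s t : Heis) : comm s t = Heis3 0 0 (hp s * hq t - hp t * hq s).
Proof. by case: s t => [a1 a2 a3] [b1 b2 b3]; congr Heis3 => /=; ring. Qed.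

Lemma comm_Heis_central (a b c : Heis) : comm c (comm a b) = gone Heis.
Proof. by rewrite !comm_Heis /=; congr Heis3; ring. Qed.

Lemma gpow_Heis_central t k : gpow (Heis3 0 0 t : Heis) k = Heis3 0 0 (t *+ k).
Proof. by elim: k => [|k IHk] //=; rewrite IHk; congr Heis3 => /=; rewrite ?mulrS; ring. Qed.

Lemma hp_hom : is_hom (H := addG R) (@hp R : Heis -> R).
Proof. by []. Qed.

Lemma hq_hom : is_hom (H := addG R) (@hq R : Heis -> R).
Proof. by []. Qed.

Lemma heis_lin_hom (G : group) (chi : G -> Heis) (a b : R) : is_hom chi ->
  is_hom (H := addG R) (fun g => a * hp (chi g) + b * hq (chi g)).
Proof. by move=> chi_hom g h; rewrite chi_hom /=; ring. Qed.

(* [hp (chi2 g) * hq (chi2 h) - det L * hp (chi1 g) * hq (chi1 h)] is a symmetric bilinear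
   form in the abelian parts of [chi1 g] and [chi1 h], so subtracting the associated
   quadratic form makes [2 (hz chi2 - det L * hz chi1)] additive. *)
Lemma heis_twist_additive (G : group) (chi1 chi2 : G -> Heis) (a b c d : R) :
  is_hom chi1 -> is_hom chi2 ->
  (forall g, hp (chi2 g) = a * hp (chi1 g) + b * hq (chi1 g)) ->
  (forall g, hq (chi2 g) = c * hp (chi1 g) + d * hq (chi1 g)) ->
  is_hom (H := addG R) (fun g =>
    (hz (chi2 g) - (a * d - b * c) * hz (chi1 g)) *+ 2
    - (a * c * (hp (chi1 g) * hp (chi1 g)) + b * c *+ 2 * (hp (chi1 g) * hq (chi1 g))
       + b * d * (hq (chi1 g) * hq (chi1 g)))).
Proof.
move=> chi1_hom chi2_hom hp2 hq2 g h /=.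
have:= congr1 (@hz R) (chi2_hom g h); have:= congr1 (@hz R) (chi1_hom g h).
have:= congr1 (@hp R) (chi1_hom g h); have:= congr1 (@hq R) (chi1_hom g h).
rewrite /= !hp2 !hq2 => -> -> -> ->; rewrite !mulr2n; ring.
Qed.

End Heisenberg.

Lemma unitr_neq0 (R : unitRingType) (u : R) : u \is a GRing.unit -> u != 0.
Proof. by apply: contraTneq => ->; rewrite unitr0. Qed.

Lemma masked_left_kernel (F : fieldType) m (A : 'M[F]_m) (S : pred 'I_m) j :
  S j -> (forall s, S s -> A s j = 0) ->
  exists a : 'I_m -> F, [/\ exists s, a s != 0, forall s, ~~ S s -> a s = 0
                          & forall i, S i -> \sum_s a s * A s i = 0].
Proof.
move=> Sj Aj0.
pose B := \matrix_(s, i) if S s && S i then A s i else (s == i)%:R.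
have /det0P [r r_neq0 rB] : \det B == 0.
  rewrite (expand_det_col _ j) big1 // => s _; rewrite mxE Sj andbT.
  by case: ifP => [/Aj0 ->|/negbT Ss]; rewrite ?mul0r //; case: eqP Ss => [->|]; rewrite ?Sj ?mul0r.
have rBi i : \sum_s r 0 s * B s i = 0 by have /rowP/(_ i) := rB; rewrite !mxE.
have r_out s : ~~ S s -> r 0 s = 0.
  move=> Ss; rewrite -[RHS](rBi s) (bigD1 s) //= big1 ?addr0 => [|t ts].
    by rewrite mxE (negPf Ss) andbF eqxx mulr1.
  by rewrite mxE (negPf Ss) andbF (negPf ts) mulr0.
exists (r 0); split=> // [|i Si].
  exact/rV0Pn.
rewrite -[RHS](rBi i); apply: eq_bigr => s _; rewrite mxE Si andbT.
by case: ifP => // /negbT/r_out ->; rewrite !mul0r.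
Qed.

Section Presentation.
Variables (n : nat) (e : rel 'I_n) (G : group) (x : 'I_n -> G) (y : 'I_n -> 'I_n -> G).
Hypothesis pres : presents_GGamma e x y.

Lemma hom_GammaRel (H : group) (f : G -> H) :
  is_hom f -> GammaRel e (fun i => f (x i)) (fun i j => f (y i j)).
Proof.
move=> f_hom; have [[r1 [r2 r3]] _] := pres.
split; [|split].
- by move=> i j lt_ij eij; rewrite -hom_comm // r1 // hom1.
- by move=> i j lt_ij nij; rewrite -hom_comm // r2.
- by move=> l i j lt_ij nij; rewrite -hom_comm // r3 // hom1.
Qed.

Lemma hom_ext (H : group) (f1 f2 : G -> H) : is_hom f1 -> is_hom f2 ->
  (forall i, f1 (x i) = f2 (x i)) -> forall g, f1 g = f2 g.
Proof.
move=> f1_hom f2_hom f12 g; have [[_ [r2 _]] U] := pres.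
have [f [_ _ _ f_uniq]] := U H _ _ (hom_GammaRel f1_hom).
rewrite (f_uniq f1) // (f_uniq f2) // => i j lt_ij nij.
by rewrite -r2 // !hom_comm // !f12.
Qed.

Lemma hom_of_class2 (H : group) (xh : 'I_n -> H) :
  (forall a b c : H, comm c (comm a b) = gone H) ->
  (forall i j, e i j -> comm (xh j) (xh i) = gone H) ->
  exists f : G -> H, is_hom f /\ forall i, f (x i) = xh i.
Proof.
move=> central edge_comm; have [_ U] := pres.
have [|f [f_hom fx _ _]] := U H xh (fun i j => comm (xh j) (xh i)); last by exists f.
by split; [|split] => *; [apply: edge_comm | | apply: central].
Qed.

Lemma additive_ext (V : zmodType) (a : 'I_n -> V) :
  exists f : G -> addG V, is_hom f /\ forall i, f (x i) = a i.
Proof. by apply: hom_of_class2 => *; rewrite comm_addG. Qed.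

(* [expsum i g] is the exponent sum of [x i] in any word in the [x]'s representing [g],
   i.e. the [i]-th coordinate of the abelianisation [G -> Z^n]. *)
Definition expsum (i : 'I_n) : G -> int :=
  proj1_sig (constructive_indefinite_description _ (additive_ext (fun j => (i == j)%:R))).

Lemma expsum_hom i : is_hom (H := addG int) (expsum i).
Proof. by rewrite /expsum; case: constructive_indefinite_description => ? []. Qed.

Lemma expsum_x i j : expsum i (x j) = (i == j)%:R.
Proof. by rewrite /expsum; case: constructive_indefinite_description => ? []. Qed.

Lemma additive_expand (V : zmodType) (f : G -> addG V) :
  is_hom f -> forall g, f g = \sum_j f (x j) *~ expsum j g.
Proof.
move=> f_hom; apply: hom_ext => // [g h|i] /=.
  by rewrite -big_split; apply: eq_bigr => j _; rewrite expsum_hom mulrzDr.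
rewrite (bigD1 i) //= expsum_x eqxx big1 ?addr0 // => j ji.
by rewrite expsum_x (negPf ji).
Qed.

Definition ab (g : G) : 'cV[rat]_n := \col_i (expsum i g)%:~R.

Lemma ab_hom : is_hom (H := addG _) ab.
Proof. by move=> g h; apply/colP => i; rewrite !mxE expsum_hom intrD. Qed.

Lemma ab_x j : ab (x j) = delta_mx j 0.
Proof. by apply/colP => i; rewrite !mxE expsum_x mulrz_nat andbT. Qed.

Lemma ab_comm a b : ab (comm a b) = 0.
Proof. by rewrite (hom_comm ab_hom) comm_addG. Qed.

Lemma additive_eq0 (V : zmodType) (f : G -> addG V) g :
  is_hom f -> ab g = 0 -> f g = 0.
Proof.
move=> f_hom /colP g0; rewrite (additive_expand f_hom) big1 // => j _.
by have := g0 j; rewrite !mxE => /eqP; rewrite intr_eq0 => /eqP ->.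
Qed.

Lemma reidemeister_infinite_of_heis (R : numDomainType) (phi : G -> G) (rho : G -> Heis R)
    (a b c d t : R) (z : G) :
  is_hom phi -> is_hom rho ->
  (forall u, ab (phi u) = ab u -> ab u = 0) ->
  (forall g, hp (rho (phi g)) = a * hp (rho g) + b * hq (rho g)) ->
  (forall g, hq (rho (phi g)) = c * hp (rho g) + d * hq (rho g)) ->
  a * d - b * c = 1 -> ab z = 0 -> rho z = Heis3 0 0 t -> t != 0 ->
  reidemeister_infinite phi.
Proof.
move=> phi_hom rho_hom ab_fix rho_p rho_q detL z0 rho_z t0.
apply: (reidemeister_infinite_of_family phi_hom (z := gpow z)) => k l u zkl.
have u0 : ab u = 0.
  apply: ab_fix; have := congr1 ab zkl.
  rewrite !ab_hom (homV ab_hom) !(hom_gpow _ _ ab_hom) z0 !gpow_addG !mul0rn /=.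
  by rewrite addr0 => /esym/eqP; rewrite subr_eq0 => /eqP.
have vanish (f : G -> addG R) : is_hom f -> f u = 0 by move/additive_eq0; apply.
have p0 : hp (rho u) = 0 := vanish _ (hom_comp rho_hom (@hp_hom R)).
have q0 : hq (rho u) = 0 := vanish _ (hom_comp rho_hom (@hq_hom R)).
(* As [det L = 1], [phi] fixes the centre coordinate of [rho] on the kernel of [ab]. *)
have z_eq : hz (rho (phi u)) = hz (rho u).
  have := vanish _ (heis_twist_additive rho_hom (hom_comp phi_hom rho_hom) rho_p rho_q).
  rewrite /= p0 q0 detL !mulr0 !addr0 subr0 mul1r => /eqP.
  by rewrite mulrn_eq0 /= subr_eq0 => /eqP.
have etaE (s : heis3 R) : s = Heis3 (hp s) (hq s) (hz s) by case: s.
have := congr1 rho zkl; rewrite !rho_hom (homV rho_hom) !(hom_gpow _ _ rho_hom) rho_z.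
rewrite !gpow_Heis_central (etaE (rho (phi u))) rho_p rho_q z_eq (etaE (rho u)) p0 q0.
by move=> [_ _]; rewrite !(mulr0, mul0r, addr0, add0r) addrAC subrr add0r => /(mulrIn t0).
Qed.

Lemma heis_rep (R : comPzRingType) (P Q : 'I_n -> R) :
  (forall i j, e i j -> P i * Q j = P j * Q i) ->
  exists chi : G -> Heis R, is_hom chi /\ forall i, chi (x i) = Heis3 (P i) (Q i) 0.
Proof.
move=> PQ; apply: hom_of_class2 => [*|i j eij]; first exact: comm_Heis_central.
by rewrite comm_Heis /= (PQ i j eij) subrr.
Qed.

Hypothesis sg : simple_graph e.

Lemma heis_edge (R : comPzRingType) (chi : G -> Heis R) i j : is_hom chi -> e i j ->
  hp (chi (x i)) * hq (chi (x j)) = hp (chi (x j)) * hq (chi (x i)).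
Proof.
move=> chi_hom eij; have [r1 _] := hom_GammaRel chi_hom; have [e_sym _] := sg.
have edge_comm (a b : 'I_n) : (a < b)%N -> e a b ->
    hp (chi (x b)) * hq (chi (x a)) = hp (chi (x a)) * hq (chi (x b)).
  move=> lt_ab eab; have := congr1 (@hz R) (r1 a b lt_ab eab).
  by rewrite comm_Heis /= => /eqP; rewrite subr_eq0 => /eqP.
have [lt_ij|lt_ji|/val_inj ->] := ltngtP i j; last by [].
  by rewrite (edge_comm i j).
by rewrite (edge_comm j i) // e_sym.
Qed.

Lemma heis_nonedge k j : ~~ e k j ->
  exists chi : G -> Heis int, [/\ is_hom chi, forall g, hp (chi g) = expsum k g
                                & forall g, hq (chi g) = expsum j g].
Proof.
move=> nkj; have [e_sym _] := sg.
have not_kj a b : e a b -> (k == a) && (j == b) = false.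
  by move=> eab; apply/andP => -[/eqP ka /eqP jb]; rewrite ka jb eab in nkj.
have [|chi [chi_hom chi_x]] :=
    heis_rep (R := int) (P := fun i => (k == i)%:R) (Q := fun i => (j == i)%:R).
  by move=> a b eab; rewrite -!natrM !mulnb !not_kj // e_sym.
exists chi; split=> // g.
  by apply: (hom_ext (hom_comp chi_hom (@hp_hom _)) (expsum_hom k)) => i; rewrite chi_x expsum_x.
by apply: (hom_ext (hom_comp chi_hom (@hq_hom _)) (expsum_hom j)) => i; rewrite chi_x expsum_x.
Qed.

Lemma expsum_edge (psi : G -> G) k j a b : is_hom psi -> ~~ e k j -> e a b ->
  expsum k (psi (x a)) * expsum j (psi (x b)) = expsum k (psi (x b)) * expsum j (psi (x a)).
Proof.
move=> psi_hom nkj eab; have [chi [chi_hom chi_p chi_q]] := heis_nonedge nkj.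
by have := heis_edge (hom_comp psi_hom chi_hom) eab; rewrite !chi_p !chi_q.
Qed.

Section Automorphism.
Variables phi phi' : G -> G.
Hypotheses (phi_hom : is_hom phi) (phi'_hom : is_hom phi').
Hypotheses (phiK : cancel phi phi') (phi'K : cancel phi' phi).

Definition autmx : 'M[rat]_n := \matrix_(i, j) (expsum i (phi (x j)))%:~R.

Lemma expsum_phi i g : expsum i (phi g) = \sum_j expsum i (phi (x j)) * expsum j g.
Proof.
rewrite (additive_expand (hom_comp phi_hom (expsum_hom i))).
by apply: eq_bigr => j _; rewrite mulrzz.
Qed.

Lemma ab_phi g : ab (phi g) = autmx *m ab g.
Proof.
have mx_hom : is_hom (H := addG _) (fun g => autmx *m ab g).
  by move=> a b; rewrite ab_hom mulmxDr.
apply: (hom_ext (hom_comp phi_hom ab_hom) mx_hom) => j /=.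
by rewrite ab_x -colE; apply/colP => i; rewrite !mxE.
Qed.

Lemma reidemeister_infinite_of_det_eq0 :
  \det (1%:M - autmx) = 0 -> reidemeister_infinite phi.
Proof.
move/eqP/det0P => [r /rV0Pn [j rj] r_fix].
have rM : r *m autmx = r by move: r_fix; rewrite mulmxBr mulmx1 => /subr0_eq.
pose h (g : G) : addG rat := (r *m ab g) 0 0.
apply: (reidemeister_infinite_of_fixed_character (h := h) (g := x j)) => // [a b|c|].
- by rewrite /h ab_hom mulmxDr mxE.
- by rewrite /h ab_phi mulmxA rM.
- by rewrite /h ab_x -colE mxE.
Qed.

Lemma ab_fixfree :
  \det (1%:M - autmx) != 0 -> forall u, ab (phi u) = ab u -> ab u = 0.
Proof.
move=> det_neq0 u; rewrite ab_phi => fix_u.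
have unit_mx : 1%:M - autmx \in unitmx by rewrite unitmxE unitfE.
by rewrite -(mulKmx unit_mx (ab u)) mulmxBl mul1mx fix_u subrr mulmx0.
Qed.

Lemma expsum_phi_diag_unit i :
  (forall j, j != i -> expsum i (phi (x j)) * expsum j (phi' (x i)) = 0) ->
  expsum i (phi (x i)) \is a GRing.unit.
Proof.
move=> off_diag; have := expsum_x i i; rewrite eqxx -{1}(phi'K (x i)) expsum_phi.
rewrite (bigD1 i) //= big1 ?addr0 // => one_eq.
by apply/unitrPr; exists (expsum i (phi' (x i))).
Qed.

Variables v w : 'I_n.
Hypothesis nonnb_v : nonnb e v = [set w].
Hypothesis nonnb_gt1 : forall k, k != v -> (1 < #|nonnb e k|)%N.

Lemma w_neq_v : w != v.
Proof. by have := set11 w; rewrite -nonnb_v inE => /andP[]. Qed.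

Lemma not_edge_vw : ~~ e v w.
Proof. by have := set11 w; rewrite -nonnb_v inE => /andP[]. Qed.

Lemma edge_v j : j != v -> j != w -> e v j.
Proof.
move=> jv jw; apply: contraT => nvj.
have : j \in nonnb e v by rewrite inE nvj jv.
by rewrite nonnb_v inE (negPf jw).
Qed.

Lemma xv_form (R : comPzRingType) (p q : G -> addG R) : is_hom p -> is_hom q ->
  (forall j, e v j -> p (x v) * q (x j) = p (x j) * q (x v)) ->
  forall g, p (x v) * q g - p g * q (x v)
            = (p (x v) * q (x w) - p (x w) * q (x v)) *~ expsum w g.
Proof.
move=> p_hom q_hom pq_v g.
transitivity (\sum_j (p (x v) * q (x j) - p (x j) * q (x v)) *~ expsum j g).
  rewrite (additive_expand q_hom g) (additive_expand p_hom g) mulr_sumr mulr_suml -sumrB.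
  by apply: eq_bigr => j _; rewrite mulrzAr mulrzAl mulrzBl.
rewrite (bigD1 w) //= big1 ?addr0 // => j jw.
have [-> | jv] := eqVneq j v; first by rewrite subrr mul0rz.
by rewrite pq_v ?edge_v // subrr mul0rz.
Qed.

Lemma expsum_aut_xv (psi psi' : G -> G) : is_hom psi -> cancel psi' psi ->
  forall k, k != v -> expsum k (psi (x v)) = 0.
Proof.
move=> psi_hom psi'K k kv; set E := expsum k (psi (x v)).
have [j1 [j2 [nb1 nb2 j12]]] := card_gt1P (nonnb_gt1 kv).
pose T j := E * expsum j (psi (x w)) - expsum k (psi (x w)) * expsum j (psi (x v)).
have key j j' : j \in nonnb e k -> j' \in nonnb e k ->
    E * (j == j')%:R = T j * expsum w (psi' (x j')).
  rewrite !inE => /andP[nkj _] /andP[_ j'k].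
  have := xv_form (hom_comp psi_hom (expsum_hom k)) (hom_comp psi_hom (expsum_hom j))
    (fun i evi => expsum_edge psi_hom nkj evi) (psi' (x j')).
  by rewrite /= !psi'K !expsum_x [k == j']eq_sym (negPf j'k) mul0r subr0 mulrzz.
have := key j1 j2 nb1 nb2; rewrite (negPf j12) mulr0 => /esym/eqP.
rewrite mulf_eq0 => /orP[/eqP T1|/eqP w2].
  by have := key j1 j1 nb1 nb1; rewrite eqxx mulr1 T1 mul0r.
by have := key j2 j2 nb2 nb2; rewrite eqxx mulr1 w2 mulr0.
Qed.

Lemma expsum_phi_xv_unit : expsum v (phi (x v)) \is a GRing.unit.
Proof.
apply: expsum_phi_diag_unit => j jv.
by rewrite (expsum_aut_xv phi'_hom phiK jv) mulr0.
Qed.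

Lemma expsum_w_phi i : i != w -> expsum w (phi (x i)) = 0.
Proof.
move=> iw; have [-> | iv] := eqVneq i v; first exact: (expsum_aut_xv phi_hom phi'K w_neq_v).
have := expsum_edge phi_hom not_edge_vw (edge_v iv iw).
rewrite (expsum_aut_xv phi_hom phi'K w_neq_v) mulr0 => /eqP.
by rewrite mulf_eq0 (negPf (unitr_neq0 expsum_phi_xv_unit)) => /eqP.
Qed.

Lemma expsum_phi_xw_unit : expsum w (phi (x w)) \is a GRing.unit.
Proof. by apply: expsum_phi_diag_unit => j jw; rewrite expsum_w_phi // mul0r. Qed.

Lemma expsum_phi_nbw s i : ~~ e s w -> e i w -> expsum s (phi (x i)) = 0.
Proof.
move=> nsw eiw; have iw : i != w by apply: contraTneq eiw => ->; have [_ ->] := sg.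
have := expsum_edge phi_hom nsw eiw; rewrite (expsum_w_phi iw) mulr0 => /eqP.
by rewrite mulf_eq0 (negPf (unitr_neq0 expsum_phi_xw_unit)) orbF => /eqP.
Qed.

Lemma expsum_phi_diag_of_det : \det (1%:M - autmx) != 0 ->
  expsum v (phi (x v)) = -1 /\ expsum w (phi (x w)) = -1.
Proof.
move=> det_neq0; split.
  have /orP[/eqP eps1|/eqP //] := expsum_phi_xv_unit.
  case/eqP: det_neq0; rewrite (expand_det_col _ v) big1 // => i _; rewrite !mxE.
  have [-> | iv] := eqVneq i v; first by rewrite eps1 /= subrr mul0r.
  by rewrite (expsum_aut_xv phi_hom phi'K iv) /= subr0 mul0r.
have /orP[/eqP delta1|/eqP //] := expsum_phi_xw_unit.
case/eqP: det_neq0; rewrite (expand_det_row _ w) big1 // => j _; rewrite !mxE.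
have [<- | wj] := eqVneq w j; first by rewrite delta1 /= subrr mul0r.
by rewrite (expsum_w_phi _) 1?eq_sym //= subr0 mul0r.
Qed.

Lemma nonnb_w_eigenvector : expsum v (phi (x v)) = -1 ->
  exists a : 'I_n -> rat, [/\ exists s, a s != 0, forall i, e i w || (i == w) -> a i = 0
                            & forall i, i != w -> \sum_s a s * autmx s i = - a i].
Proof.
move=> eps; pose S := [pred s | ~~ e s w && (s != w)].
have [|s Ss|a [a_neq0 a_out a_ker]] := masked_left_kernel (A := autmx + 1%:M) (S := S) (j := v).
- by rewrite /= not_edge_vw eq_sym w_neq_v.
- rewrite !mxE; have [-> | sv] := eqVneq s v; first by rewrite eps /= addNr.
  by rewrite (expsum_aut_xv phi_hom phi'K sv) /= addr0.
exists a; split=> // [i nbi|i iw]; first by apply: a_out; rewrite /= negb_and !negbK.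
case Si: (S i).
  have delta_sum : \sum_s a s * (s == i)%:R = a i.
    by rewrite (bigD1 i) //= eqxx mulr1 big1 ?addr0 // => s /negPf ->; rewrite mulr0.
  have := a_ker i Si; rewrite (eq_bigr (fun s => a s * autmx s i + a s * (s == i)%:R)).
    by rewrite big_split /= delta_sum => /eqP; rewrite addr_eq0 => /eqP.
  by move=> s _; rewrite [in LHS]mxE [1%:M _ _]mxE mulrDr.
move: Si; rewrite /= iw andbT => /negbFE eiw.
rewrite (a_out i) /= ?eiw // oppr0 big1 // => s _.
have [Ss | /a_out ->] := boolP (S s); last by rewrite mul0r.
by move: Ss => /andP[nsw _]; rewrite mxE (expsum_phi_nbw nsw eiw) mulr0.
Qed.

Lemma reidemeister_infinite_of_det_neq0 :
  \det (1%:M - autmx) != 0 -> reidemeister_infinite phi.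
Proof.
move=> det_neq0; have [eps delta] := expsum_phi_diag_of_det det_neq0.
have [a [[s0 as0] a_nbw a_eig]] := nonnb_w_eigenvector eps.
have a_w : a w = 0 by apply: a_nbw; rewrite eqxx orbT.
pose eta := \sum_s a s * autmx s w.
have [|rho [rho_hom rho_x]] := heis_rep (P := a) (Q := fun i => (w == i)%:R).
  have vanish i j : e i j -> a i * (w == j)%:R = 0.
    case: eqVneq => [<- eiw|_ _]; last by rewrite mulr0.
    by rewrite (a_nbw i) ?eiw ?mul0r.
  by move=> i j eij; rewrite !vanish // (sg.1 j).
have rho_q g : hq (rho g) = (expsum w g)%:~R.
  have q_hom : is_hom (H := addG rat) (fun g => (expsum w g)%:~R).
    by move=> g1 g2; rewrite expsum_hom intrD.
  apply: (hom_ext (hom_comp rho_hom (@hq_hom _)) q_hom) => i /=.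
  by rewrite rho_x expsum_x mulrz_nat.
have rho_p g : hp (rho g) = \sum_s a s * (expsum s g)%:~R.
  rewrite (additive_expand (hom_comp rho_hom (@hp_hom _))).
  by apply: eq_bigr => s _; rewrite rho_x mulrzr.
apply: (reidemeister_infinite_of_heis (a := -1) (b := eta) (c := 0) (d := -1)
          phi_hom rho_hom (ab_fixfree det_neq0) _ _ _ (ab_comm (x s0) (x w)) _ as0).
- apply: (hom_ext (hom_comp (hom_comp phi_hom rho_hom) (@hp_hom _)) (heis_lin_hom _ _ rho_hom)).
  move=> i /=; rewrite rho_p rho_x /= (eq_bigr (fun s => a s * autmx s i)) => [|s _]; last first.
    by rewrite mxE.
  have [<- | iw] := eqVneq w i; first by rewrite a_w mulr0 add0r /= mulr1.
  by rewrite a_eig 1?eq_sym //= mulr0 addr0 mulN1r.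
- apply: (hom_ext (hom_comp (hom_comp phi_hom rho_hom) (@hq_hom _)) (heis_lin_hom _ _ rho_hom)).
  move=> i /=; rewrite rho_q rho_x /=; have [<- | iw] := eqVneq w i.
    by rewrite delta /=; ring.
  by rewrite expsum_w_phi 1?eq_sym //=; ring.
- by rewrite mulr0 subr0 mulrNN mul1r.
- by rewrite hom_comm // comm_Heis !rho_x /= a_w mul0r subr0 eqxx mulr1.
Qed.

End Automorphism.
End Presentation.

Local Close Scope ring_scope.

Theorem theorem4p4 (n : nat) (e : rel 'I_n) (G : group)
    (x : 'I_n -> G) (y : 'I_n -> 'I_n -> G) :
  simple_graph e ->
  2 <= n ->
  (forall i, deg e i <= n - 2) ->
  (exists i, deg e i = n - 2 /\ forall j, j != i -> deg e j != n - 2) ->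
  presents_GGamma e x y ->
  R_infty_property G.
Proof.
move=> sg n_ge2 deg_le [v [deg_v deg_uniq]] pres phi [phi_hom [phi' phiK phi'K]].
have phi'_hom := hom_can phi_hom phiK phi'K.
have [w nonnb_v] : exists w, nonnb e v = [set w].
  by apply/cards1P; have := card_nonnb v sg; rewrite deg_v; lia.
have nonnb_gt1 k : k != v -> 1 < #|nonnb e k|.
  by move=> kv; have := card_nonnb k sg; have := deg_le k; have := deg_uniq k kv; lia.
have [det0 | det_neq0] := eqVneq (\det (1%:M - autmx pres phi))%R 0%R.
  exact: (reidemeister_infinite_of_det_eq0 phi_hom det0).
exact: (reidemeister_infinite_of_det_neq0 sg phi_hom phi'_hom phiK phi'K nonnb_v nonnb_gt1
          det_neq0).
Qed.
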